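(* In the cylindrical KLRW category $\mathcal C^{cyl}_{\bullet,n,F}$, let $D:\theta\to\theta'$ be a morphism represented by a diagram with exactly one crossing between a red strand and a black strand, and no other crossings and no dots. Then every morphism $\theta\to\theta'$ homogeneous of the same $J$-, $u$-, $\hbar$- and $C$-degrees as $D$ is a scalar multiple of $D$.
   Context: $\mathcal C^{cyl}_{\bullet,n,F}$: for a finite set $F$ of red points on $S^1$, objects are configurations of $n$ black points in $S^1\setminus F$; morphisms are the $\mathbb Z[u,\hbar]$-span of strand diagrams on $S^1\times[0,1]$ (vertical red strands at $F$, black strands possibly carrying dots), composed by stacking, modulo isotopy and the relations: black–black bigon $=0$; red–black bigon $=u\cdot$(black strand with a dot); the two ways of passing two crossing black strands around a red strand differ by $u\hbar\cdot\mathrm{id}$; moving a dot through a black–black crossing changes the diagram by $\hbar\cdot\mathrm{id}$. Gradings: a red–black crossing, a black–black crossing, and a dot have $J$-degrees $1,-2,2$, $u$-degrees $\tfrac12,0,1$, and $\hbar$-degrees $0,1,-1$ respectively. The $C$-degree: fix a point $\varphi\in S^1$ away from red and black points; each time a black strand crosses $\varphi$ from right to left the $C$-degree increases by $1$, and from left to right it decreases by $1$. *)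

From HB Require Import structures.
From mathcomp Require Import all_boot all_algebra.
Set Implicit Arguments. Unset Strict Implicit. Unset Printing Implicit Defensive.
Import GRing.Theory Num.Theory.

(* An object is read off the cylinder cut open at the base point phi:
   the sequence of colours of the points (true = black, false = red),
   position 0 being immediately to the right of phi and the last position
   immediately to the left of phi. *)
Definition obj := seq bool.

(* object of C^cyl_{bullet,n,F} with #|F| = r red points and n black points *)
Definition is_obj (r n : nat) (s : obj) : bool :=
  (count id s == n) && (count negb s == r).

(* X i    : crossing of the strands at positions i, i+1 (not both red)
   Dot i  : a dot on the black strand at position i
   RotL   : the black strand at position 0 crosses phi from right to left
            (it ends at the last position)
   RotR   : the black strand at the last position crosses phi from left to
            right (it ends at position 0) *)
Inductive gen := X of nat | Dot of nat | RotL | RotR.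

Definition gen_code (g : gen) : nat * nat :=
  match g with X i => (0, i) | Dot i => (1, i) | RotL => (2, 0) | RotR => (3, 0) end.
Definition gen_decode (p : nat * nat) : option gen :=
  match p with
  | (0, i) => Some (X i) | (1, i) => Some (Dot i)
  | (2, _) => Some RotL | (3, _) => Some RotR | _ => None end.
Lemma gen_codeK : pcancel gen_code gen_decode. Proof. by case. Qed.
HB.instance Definition _ := Equality.copy gen (pcan_type gen_codeK).

(* a word = a diagram, read from bottom (first letter) to top *)
Definition word := seq gen.

Definition swap_at (i : nat) (s : obj) : obj :=
  take i s ++ [:: nth false s i.+1; nth false s i] ++ drop i.+2 s.

Definition step (g : gen) (s : obj) : option obj :=
  match g with
  | X i => if (i.+1 < size s) && (nth false s i || nth false s i.+1)
           then Some (swap_at i s) else None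
  | Dot i => if nth false s i then Some s else None
  | RotL => if s is b :: s' then (if b then Some (rcons s' b) else None) else None
  | RotR => if s is b :: s' then
              (if last b s' then Some (last b s' :: belast b s') else None)
            else None
  end.

Fixpoint run (w : word) (s : obj) : option obj :=
  match w with
  | [::] => Some s
  | g :: w' => if step g s is Some s1 then run w' s1 else None
  end.

Local Open Scope ring_scope.
Definition deg := (rat * rat * rat * rat)%type.
Definition deg0 : deg := (0, 0, 0, 0).
Definition dadd (x y : deg) : deg :=
  let '(a, b, c, d) := x in let '(a', b', c', d') := y in
  (a + a', b + b', c + c', d + d').

Definition gdeg (g : gen) (s : obj) : deg :=
  match g with
  | X i => if nth false s i && nth false s i.+1
           then (-2, 0, 1, 0)
           else (1, 2%:R^-1, 0, 0)
  | Dot _ => (2, 1, -1, 0)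
  | RotL => (0, 0, 0, 1)
  | RotR => (0, 0, 0, -1)
  end.

Fixpoint wdeg (w : word) (s : obj) : deg :=
  match w with
  | [::] => deg0
  | g :: w' => dadd (gdeg g s) (if step g s is Some s1 then wdeg w' s1 else deg0)
  end.

(* a term (a, b, w) stands for u^a * hbar^b * w *)
Definition term := (nat * nat * word)%type.
Definition fsum := seq (int * term).

(* degrees of the scalars, forced by homogeneity of the defining relations:
   u has degree (J,u,hbar,C) = (0,0,1,0), hbar has degree (0,1,0,0). *)
Definition tdeg (s : obj) (t : term) : deg :=
  let '(a, b, w) := t in dadd (wdeg w s) (0, b%:R, a%:R, 0).

Definition coef (x : fsum) (t : term) : int := \sum_(p <- x | p.2 == t) p.1.

Definition fscale (k : int) (x : fsum) : fsum := [seq (k * p.1, p.2) | p <- x].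
Definition tmul (t1 t2 : term) : term :=
  ((t1.1.1 + t2.1.1)%N, (t1.1.2 + t2.1.2)%N, t1.2 ++ t2.2).
(* product = vertical stacking: x below, y on top *)
Definition fmul (x y : fsum) : fsum :=
  [seq (p.1 * q.1, tmul p.2 q.2) | p <- x, q <- y].
Definition wsum (w : word) : fsum := [:: (1, (0%N, 0%N, w))].
Definition mon (a b : nat) : fsum := [:: (1, (a, b, [::]))].

Definition scal (c : seq (int * (nat * nat))) (w : word) : fsum :=
  [seq (p.1, (p.2.1, p.2.2, w)) | p <- c].

Definition is_local (g : gen) : bool :=
  match g with X _ | Dot _ => true | _ => false end.
Definition support (g : gen) : seq nat :=
  match g with X i => [:: i; i.+1] | Dot i => [:: i] | _ => [::] end.
Definition is_rot (g : gen) : bool :=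
  match g with RotL | RotR => true | _ => false end.

Inductive basic_rel (s : obj) : fsum -> fsum -> Prop :=
| br_far g1 g2 : is_local g1 -> is_local g2 ->
    ~~ has (fun j => j \in support g1) (support g2) ->
    run [:: g1; g2] s != None -> run [:: g2; g1] s != None ->
    basic_rel s (wsum [:: g1; g2]) (wsum [:: g2; g1])
| br_dot_rb i k k' : (i.+1 < size s)%N ->
    ((k == i) && (k' == i.+1)) || ((k == i.+1) && (k' == i)) ->
    nth false s k -> ~~ nth false s k' ->
    basic_rel s (wsum [:: Dot k; X i]) (wsum [:: X i; Dot k'])
| br_rot_inv1 : head false s -> basic_rel s (wsum [:: RotL; RotR]) (wsum [::])
| br_rot_inv2 : run [:: RotR] s != None -> basic_rel s (wsum [:: RotR; RotL]) (wsum [::])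
(* isotopy on the cylinder: local pieces slide around the cylinder *)
| br_rot_X p : (0 < p)%N -> run [:: X p; RotL] s != None ->
    basic_rel s (wsum [:: X p; RotL]) (wsum [:: RotL; X p.-1])
| br_rot_Dot p : (0 < p)%N -> run [:: Dot p; RotL] s != None ->
    basic_rel s (wsum [:: Dot p; RotL]) (wsum [:: RotL; Dot p.-1])
| br_rot_Dot0 : run [:: Dot 0; RotL] s != None ->
    basic_rel s (wsum [:: Dot 0; RotL]) (wsum [:: RotL; Dot (size s).-1])
| br_bb_bigon i : (i.+1 < size s)%N -> nth false s i -> nth false s i.+1 ->
    basic_rel s (wsum [:: X i; X i]) [::]
| br_rb_bigon i k : (i.+1 < size s)%N -> (k == i) || (k == i.+1) ->
    nth false s k -> nth false s i != nth false s i.+1 ->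
    basic_rel s (wsum [:: X i; X i]) (fmul (mon 1 0) (wsum [:: Dot k]))
| br_dot_bb1 i : (i.+1 < size s)%N -> nth false s i -> nth false s i.+1 ->
    basic_rel s (wsum [:: Dot i; X i]) (wsum [:: X i; Dot i.+1] ++ mon 0 1)
| br_dot_bb2 i : (i.+1 < size s)%N -> nth false s i -> nth false s i.+1 ->
    basic_rel s (wsum [:: Dot i.+1; X i]) (wsum [:: X i; Dot i] ++ fscale (-1) (mon 0 1))
| br_braid i : (i.+2 < size s)%N -> run [:: X i; X i.+1; X i] s != None ->
    ~~ [&& nth false s i, ~~ nth false s i.+1 & nth false s i.+2] ->
    basic_rel s (wsum [:: X i; X i.+1; X i]) (wsum [:: X i.+1; X i; X i.+1])
| br_brb i : (i.+2 < size s)%N ->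
    nth false s i -> ~~ nth false s i.+1 -> nth false s i.+2 ->
    basic_rel s (wsum [:: X i; X i.+1; X i])
                (wsum [:: X i.+1; X i; X i.+1] ++ mon 1 1).

Inductive inspan (th : obj) : fsum -> Prop :=
| sp_rel s s' L R p q a b :
    basic_rel s L R -> run p th = Some s ->
    (forall t, t \in L -> run t.2.2 s = Some s') -> run q s' != None ->
    inspan th (fmul (mon a b) (fmul (wsum p) (fmul L (wsum q))) ++
               fscale (-1) (fmul (mon a b) (fmul (wsum p) (fmul R (wsum q)))))
| sp_add x y : inspan th x -> inspan th y -> inspan th (x ++ y)
| sp_scale k x : inspan th x -> inspan th (fscale k x)
| sp_ext x y : (forall t, coef x t = coef y t) -> inspan th x -> inspan th y.

Definition hom_eq (th : obj) (x y : fsum) : Prop := inspan th (x ++ fscale (-1) y).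

Definition homog (th th' : obj) (d : deg) (x : fsum) : Prop :=
  forall kt, kt \in x -> run kt.2.2 th = Some th' /\ tdeg th kt.2 = d.

(* D is a diagram th -> th' with exactly one crossing, which is red-black,
   no other crossings and no dots (strands may cross phi) *)
Definition one_rb_crossing (th th' : obj) (D : word) : Prop :=
  run D th = Some th' /\
  exists p q i, [/\ D = p ++ X i :: q, all is_rot p, all is_rot q &
    forall s, run p th = Some s -> nth false s i != nth false s i.+1].

(* Write a homogeneous morphism as a combination of terms u^a hbar^b w and
   count the red-black crossings, black-black crossings and dots of each w.
   Matching the u-degree of D leaves no dot, a single red-black crossing and
   b = 0; matching the hbar-degree then leaves no black-black crossing and
   a = 0.  So w is a word of rotations around the cylinder with one red-black
   crossing, and the C-degree says it winds as often as D.  Cancelling opposite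
   rotations and sliding the crossing below the rotations brings w to a normal
   form: the crossing, preceded by one rotation when it straddles the base
   point, followed by a monotone word of rotations.  This normal form is
   determined by the source, the target and the winding number, so w = D. *)

From Pilot Require Import Defs.
From HB Require Import structures.
From mathcomp Require Import all_boot all_algebra.
From mathcomp Require Import ring lra zify.
Import GRing.Theory Num.Theory.
Set Implicit Arguments. Unset Strict Implicit. Unset Printing Implicit Defensive.

Lemma coef_nil t : coef [::] t = 0%R.
Proof. by rewrite /coef big_nil. Qed.

Lemma coef_cons_term k u (x : fsum) t :
  coef ((k, u) :: x) t = ((if u == t then k else 0) + coef x t)%R.
Proof. by rewrite /coef big_cons /=; case: (u == t); rewrite ?add0r. Qed.

Lemma coef_cat (x y : fsum) t : coef (x ++ y) t = (coef x t + coef y t)%R.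
Proof. by rewrite /coef big_cat. Qed.

Lemma coef_fscale k (x : fsum) t : coef (fscale k x) t = (k * coef x t)%R.
Proof. by rewrite /coef /fscale big_map mulr_sumr. Qed.

Lemma inspan0 th x : inspan th x -> inspan th [::].
Proof.
move=> /(sp_scale 0) /sp_ext; apply=> t.
by rewrite coef_fscale mul0r coef_nil.
Qed.

Lemma hom_eq_sym th x y : hom_eq th x y -> hom_eq th y x.
Proof.
move=> /(sp_scale (-1)) /sp_ext; apply=> t.
rewrite !coef_fscale !coef_cat !coef_fscale; ring.
Qed.

Lemma hom_eq_trans th x y z : hom_eq th x y -> hom_eq th y z -> hom_eq th x z.
Proof.
move=> Hxy Hyz; apply: (sp_ext _ (sp_add Hxy Hyz)) => t.
rewrite !coef_cat !coef_fscale; ring.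
Qed.

(* [hom_eq] is reflexive only once [inspan th [::]] is known, hence the
   explicit reflexive closure. *)
Definition wequiv th (w1 w2 : word) := w1 = w2 \/ hom_eq th (wsum w1) (wsum w2).

Lemma wequiv_sym th w1 w2 : wequiv th w1 w2 -> wequiv th w2 w1.
Proof. by case=> [->|H]; [left | right; apply: hom_eq_sym]. Qed.

Lemma wequiv_trans th w1 w2 w3 :
  wequiv th w1 w2 -> wequiv th w2 w3 -> wequiv th w1 w3.
Proof.
case=> [->//|H12] [<-|H23]; first by right.
by right; apply: hom_eq_trans H12 H23.
Qed.

Lemma run_cat w1 w2 s :
  run (w1 ++ w2) s = if run w1 s is Some s1 then run w2 s1 else None.
Proof. by elim: w1 s => [|g w IH] s //=; case: (step g s). Qed.

Lemma run_catP w1 w2 s s' : run (w1 ++ w2) s = Some s' ->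
  exists2 s1, run w1 s = Some s1 & run w2 s1 = Some s'.
Proof. by rewrite run_cat; case: (run w1 s) => // s1; exists s1. Qed.

Lemma run_consP g w s s' : run (g :: w) s = Some s' ->
  exists2 s1, step g s = Some s1 & run w s1 = Some s'.
Proof. by rewrite /=; case: (step g s) => // s1; exists s1. Qed.

Lemma run_step g w s s1 : step g s = Some s1 -> run (g :: w) s = run w s1.
Proof. by move=> /= ->. Qed.

Lemma run_rcons w g s s1 s2 : run w s = Some s1 -> step g s1 = Some s2 ->
  run (rcons w g) s = Some s2.
Proof. by move=> Hw Hg; rewrite -cats1 run_cat Hw /= Hg. Qed.

Lemma run_rconsP w g s s2 : run (rcons w g) s = Some s2 ->
  exists2 s1, run w s = Some s1 & step g s1 = Some s2.
Proof.
rewrite -cats1 run_cat; case: (run w s) => // s1 /run_consP [s3 Hg [<-]].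
by exists s1.
Qed.

Lemma wequiv_basic th P s l r s' Q :
  run P th = Some s -> basic_rel s (wsum l) (wsum r) -> run l s = Some s' ->
  run Q s' != None -> wequiv th (P ++ l ++ Q) (P ++ r ++ Q).
Proof.
move=> HP Hlr Hl HQ; right.
have := sp_rel 0 0 Hlr HP _ HQ; rewrite /fmul /mon /wsum /tmul /=.
by apply=> t; rewrite inE => /eqP ->.
Qed.

Definition rb_at (s : obj) (j : nat) : bool :=
  (j.+1 < size s) && (nth false s j != nth false s j.+1).

Definition rb_after th (p : word) j := forall s, run p th = Some s -> rb_at s j.

Lemma rb_after_run th p s j : run p th = Some s -> rb_at s j -> rb_after th p j.
Proof. by move=> Hp Hj s'; rewrite Hp => -[<-]. Qed.

Lemma step_RotL s : step RotL s = if nth false s 0 then Some (rot 1 s) else None.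
Proof. by case: s => [|[] s] //=; rewrite rot1_cons. Qed.

Lemma step_RotR s :
  step RotR s = if nth false s (size s).-1 then Some (rotr 1 s) else None.
Proof.
case: s => [|b s] //=; rewrite -[nth _ _ _]/(nth false (b :: s) (size (b :: s)).-1).
by rewrite nth_last /= [in rotr _ _]lastI rotr1_rcons.
Qed.

Lemma step_RotLP s s1 : step RotL s = Some s1 -> nth false s 0 /\ s1 = rot 1 s.
Proof. by rewrite step_RotL; case: ifP => // _ [<-]. Qed.

Lemma step_RotRP s s1 :
  step RotR s = Some s1 -> nth false s (size s).-1 /\ s1 = rotr 1 s.
Proof. by rewrite step_RotR; case: ifP => // _ [<-]. Qed.

Lemma step_XP i s s1 : step (X i) s = Some s1 ->
  [/\ i.+1 < size s, nth false s i || nth false s i.+1 & s1 = swap_at i s].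
Proof. by rewrite /=; case: ifP => // /andP [H1 H2] [<-]. Qed.

Lemma step_RotL_black s : nth false s 0 -> step RotL s = Some (rot 1 s).
Proof. by rewrite step_RotL => ->. Qed.

Lemma step_RotR_black s : nth false s (size s).-1 -> step RotR s = Some (rotr 1 s).
Proof. by rewrite step_RotR => ->. Qed.

Lemma step_X_rb i s : rb_at s i -> step (X i) s = Some (swap_at i s).
Proof.
case/andP=> Hi Hrb; rewrite /= Hi.
by move: Hrb; case: (nth false s i); case: (nth false s i.+1).
Qed.

Lemma size_swap_at i s : i.+1 < size s -> size (swap_at i s) = size s.
Proof. by move=> Hi; rewrite /swap_at size_cat /= size_take size_drop; case: ifP; lia. Qed.

Lemma nth_swap_at i s k : i.+1 < size s ->
  nth false (swap_at i s) k =
  if k == i then nth false s i.+1 else if k == i.+1 then nth false s i else nth false s k.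
Proof.
move=> Hi; rewrite /swap_at nth_cat size_takel; last lia.
case: (ltngtP k i) => [Hk|Hk|->]; last by rewrite subnn.
  by rewrite nth_take // !ifF //; lia.
case: (eqVneq k i.+1) => [->|Hk1]; first by rewrite subSnn.
rewrite (_ : k - i = (k - i.+2).+2)%N /=; last lia.
by rewrite nth_drop; congr nth; lia.
Qed.

Lemma swap_atK i s : i.+1 < size s -> swap_at i (swap_at i s) = s.
Proof.
move=> Hi; apply: (@eq_from_nth _ false); first by rewrite !size_swap_at.
move=> k _; rewrite !nth_swap_at ?size_swap_at // eqxx (gtn_eqF (ltnSn i)).
by case: (eqVneq k i) => [->//|_]; case: (eqVneq k i.+1) => [->|//]; rewrite eqxx.
Qed.

Lemma swap_at_rcons i s b : i.+1 < size s ->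
  swap_at i (rcons s b) = rcons (swap_at i s) b.
Proof.
move=> Hi; rewrite /swap_at -!cats1 -!catA take_cat drop_cat !nth_cat Hi ltnW //.
case: ifP => // Hi2; rewrite (_ : i.+2 - size s = 0)%N ?drop0 ?drop_oversize //; lia.
Qed.

Lemma rot1_swap_at i s : i.+2 < size s -> rot 1 (swap_at i.+1 s) = swap_at i (rot 1 s).
Proof.
case: s => // b s Hi.
by rewrite -[swap_at _ _]/(b :: swap_at i s) !rot1_cons swap_at_rcons.
Qed.

Lemma rotr1_swap_at i s : i.+2 < size s ->
  rotr 1 (swap_at i s) = swap_at i.+1 (rotr 1 s).
Proof.
move=> Hi; rewrite -{1}(rotrK 1 s) -rot1_swap_at ?size_rotr //.
by rewrite rotK.
Qed.

Lemma nth_rot1 s k : k.+1 < size s -> nth false (rot 1 s) k = nth false s k.+1.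
Proof. by case: s => //= b s Hk; rewrite rot1_cons nth_rcons ifT. Qed.

Lemma nth_rot1_last s : nth false (rot 1 s) (size s).-1 = nth false s 0.
Proof. by case: s => //= b s; rewrite rot1_cons nth_rcons ltnn eqxx. Qed.

Lemma nth_rotr1 s k : k.+1 < size s -> nth false (rotr 1 s) k.+1 = nth false s k.
Proof. by move=> Hk; rewrite -[in RHS](rotrK 1 s) nth_rot1 ?size_rotr. Qed.

Lemma nth_rotr1_0 s : nth false (rotr 1 s) 0 = nth false s (size s).-1.
Proof. by rewrite -[in RHS](rotrK 1 s) size_rot nth_rot1_last. Qed.

Lemma rb_at_rot1 s j : j.+2 < size s -> rb_at (rot 1 s) j = rb_at s j.+1.
Proof. by move=> Hj; have Hj1 := ltnW Hj; rewrite /rb_at size_rot !nth_rot1 // Hj Hj1. Qed.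

Lemma rb_at_rotr1 s j : j.+2 < size s -> rb_at (rotr 1 s) j.+1 = rb_at s j.
Proof. by move=> Hj; rewrite -{2}(rotrK 1 s) rb_at_rot1 ?size_rotr. Qed.

Lemma wequiv_cancel_LR th P s Q : run P th = Some s -> nth false s 0 ->
  run Q s != None -> wequiv th (P ++ [:: RotL; RotR] ++ Q) (P ++ Q).
Proof.
move=> HP Hs HQ; rewrite -[P ++ Q]/(P ++ [::] ++ Q).
apply: (wequiv_basic HP (br_rot_inv1 Hs) _ HQ).
have HR : step RotR (rot 1 s) = Some s.
  by rewrite step_RotR_black ?rotK // size_rot nth_rot1_last.
by rewrite (run_step _ (step_RotL_black Hs)) (run_step _ HR).
Qed.

Lemma wequiv_cancel_RL th P s Q : run P th = Some s -> nth false s (size s).-1 ->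
  run Q s != None -> wequiv th (P ++ [:: RotR; RotL] ++ Q) (P ++ Q).
Proof.
move=> HP Hs HQ; rewrite -[P ++ Q]/(P ++ [::] ++ Q).
apply: (wequiv_basic HP (br_rot_inv2 _) _ HQ).
  by rewrite (run_step _ (step_RotR_black Hs)).
have HL : step RotL (rotr 1 s) = Some s by rewrite step_RotL_black ?rotrK // nth_rotr1_0.
by rewrite (run_step _ (step_RotR_black Hs)) (run_step _ HL).
Qed.

Lemma wequiv_slide_RotL th P s j Q : run P th = Some s -> nth false s 0 ->
  j.+2 < size s -> rb_at s j.+1 -> run Q (swap_at j (rot 1 s)) != None ->
  wequiv th (P ++ [:: RotL; X j] ++ Q) (P ++ [:: X j.+1; RotL] ++ Q).
Proof.
move=> HP Hs Hj Hrb HQ.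
have Hrun : run [:: X j.+1; RotL] s = Some (swap_at j (rot 1 s)).
  have H0 : nth false (swap_at j.+1 s) 0 by rewrite nth_swap_at //; lia.
  by rewrite (run_step _ (step_X_rb Hrb)) (run_step _ (step_RotL_black H0)) rot1_swap_at.
by apply/wequiv_sym/(wequiv_basic HP (br_rot_X _ _) Hrun HQ); rewrite ?Hrun.
Qed.

(* Only RotL slides through a crossing by a defining relation; for RotR we
   conjugate: [X k; RotR] = [RotR; RotL; X k; RotR] = [RotR; X k.+1; RotL; RotR]
   = [RotR; X k.+1]. *)
Lemma wequiv_slide_RotR th P s k Q : run P th = Some s -> nth false s (size s).-1 ->
  k.+2 < size s -> rb_at s k -> run Q (swap_at k.+1 (rotr 1 s)) != None ->
  wequiv th (P ++ [:: RotR; X k.+1] ++ Q) (P ++ [:: X k; RotR] ++ Q).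
Proof.
move=> HP Hs Hk Hrb HQ.
have HR : run (rcons P RotR) th = Some (rotr 1 s) := run_rcons HP (step_RotR_black Hs).
have Hs' : nth false (rotr 1 s) 0 by rewrite nth_rotr1_0.
have Hrb' : rb_at (rotr 1 s) k.+1 by rewrite rb_at_rotr1.
have HN : nth false (swap_at k s) (size (swap_at k s)).-1.
  by rewrite size_swap_at ?nth_swap_at; try lia; rewrite !ifF //; lia.
have HRQ : run (RotR :: Q) (swap_at k s) = run Q (swap_at k.+1 (rotr 1 s)).
  by rewrite (run_step _ (step_RotR_black HN)) rotr1_swap_at.
apply/wequiv_sym/(wequiv_trans (wequiv_sym (wequiv_cancel_RL HP Hs _))).
  by rewrite -[_ ++ Q]/(X k :: RotR :: Q) (run_step _ (step_X_rb Hrb)) HRQ.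
have -> : P ++ [:: RotR; RotL] ++ [:: X k; RotR] ++ Q =
          rcons P RotR ++ [:: RotL; X k] ++ RotR :: Q by rewrite cat_rcons.
apply: (wequiv_trans (wequiv_slide_RotL HR Hs' _ _ _)); rewrite ?size_rotr ?rotrK ?HRQ //.
have -> : rcons P RotR ++ [:: X k.+1; RotL] ++ RotR :: Q =
          (P ++ [:: RotR; X k.+1]) ++ [:: RotL; RotR] ++ Q by rewrite cat_rcons -catA.
rewrite [P ++ _ ++ Q]catA; apply: (wequiv_cancel_LR _ _ HQ).
  by rewrite run_cat HP (run_step _ (step_RotR_black Hs)) (run_step _ (step_X_rb Hrb')).
by rewrite nth_swap_at ?size_rotr //; try lia; rewrite Hs'.
Qed.

Definition gwinding (g : gen) : int :=
  match g with RotL => 1 | RotR => -1 | _ => 0 end.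

Definition winding (w : word) : int := \sum_(g <- w) gwinding g.

Lemma winding_nil : winding [::] = 0.
Proof. exact: big_nil. Qed.

Lemma winding_cat w1 w2 : winding (w1 ++ w2) = (winding w1 + winding w2)%R.
Proof. exact: big_cat. Qed.

Lemma winding_cons g w : winding (g :: w) = (gwinding g + winding w)%R.
Proof. exact: big_cons. Qed.

Lemma winding_rcons w g : winding (rcons w g) = (winding w + gwinding g)%R.
Proof. by rewrite -cats1 winding_cat winding_cons winding_nil addr0. Qed.

Definition rotword (c : int) : word :=
  match c with Posz n => nseq n RotL | Negz n => nseq n.+1 RotR end.

Lemma winding_rotword c : winding (rotword c) = c.
Proof.
have wL n : winding (nseq n RotL) = n.
  by elim: n => [|n IH]; [exact: winding_nil | rewrite winding_cons IH /=; lia].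
have wR n : winding (nseq n RotR) = (- n%:Z)%R.
  by elim: n => [|n IH]; [exact: winding_nil | rewrite winding_cons IH /=; lia].
by case: c => n; rewrite ?wL ?wR ?NegzE.
Qed.

Lemma all_rot_rotword c : all is_rot (rotword c).
Proof. by case: c => n; rewrite all_nseq orbT. Qed.

Lemma rotwordD1 c : (0 <= c)%R -> rotword (c + 1) = RotL :: rotword c.
Proof. by case: c => // n _; rewrite -PoszD addn1. Qed.

Lemma rotwordB1 c : (c <= 0)%R -> rotword (c - 1) = RotR :: rotword c.
Proof. by case: c => [[|n]|n] // _; rewrite !NegzE -opprD -PoszD addn1 -NegzE. Qed.

Lemma rotword_neg c : (c < 0)%R -> rotword c = RotR :: rotword (c + 1).
Proof. by move=> Hc; rewrite -rotwordB1 ?addrK //; lia. Qed.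

Lemma rotword_pos c : (0 < c)%R -> rotword c = RotL :: rotword (c - 1).
Proof. by move=> Hc; rewrite -rotwordD1 ?subrK //; lia. Qed.

Lemma wequiv_rotword th w : forall P s s' Q, all is_rot w ->
  run P th = Some s -> run w s = Some s' -> run Q s' != None ->
  wequiv th (P ++ w ++ Q) (P ++ rotword (winding w) ++ Q) /\
  run (rotword (winding w)) s = Some s'.
Proof.
elim: w => [|g w IH] P s s' Q; first by move=> _ HP [<-]; rewrite winding_nil; split; [left|].
case: g => [i|i||] /andP [Hrot Hw] HP /run_consP [s1 Hg Hr] HQ; [by []|by []|..].
- have [Hs Es1] := step_RotLP Hg; subst s1.
  have [E Hm] := IH _ _ _ _ Hw (run_rcons HP Hg) Hr HQ; rewrite !cat_rcons in E.
  rewrite winding_cons addrC.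
  have [Hc|Hc] := boolP (0 <= winding w)%R.
    by rewrite rotwordD1 //; split; rewrite ?(run_step _ Hg).
  rewrite rotword_neg in E Hm; last by lia.
  have [_ /step_RotRP [_ ->]] := run_consP Hm; rewrite rotK => Hm'.
  split=> //; apply: (wequiv_trans E).
  by apply: (wequiv_cancel_LR HP Hs); rewrite run_cat Hm'.
- have [Hs Es1] := step_RotRP Hg; subst s1.
  have [E Hm] := IH _ _ _ _ Hw (run_rcons HP Hg) Hr HQ; rewrite !cat_rcons in E.
  rewrite winding_cons addrC.
  have [Hc|Hc] := boolP (winding w <= 0)%R.
    by rewrite rotwordB1 //; split; rewrite ?(run_step _ Hg).
  rewrite rotword_pos in E Hm; last by lia.
  have [_ /step_RotLP [_ ->]] := run_consP Hm; rewrite rotrK => Hm'.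
  split=> //; apply: (wequiv_trans E).
  by apply: (wequiv_cancel_RL HP Hs); rewrite run_cat Hm'.
Qed.

(* The head [pre ++ [:: X j]] of a normal form.  A crossing between the last
   and the first point of [s] straddles the base point, so it can only be drawn
   after one rotation, in either direction. *)
Inductive nf_head (s : obj) : word -> nat -> Prop :=
| NfFree j : rb_at s j -> nf_head s [::] j
| NfRotL : nth false s 0 -> rb_at (rot 1 s) (size s).-2 -> nf_head s [:: RotL] (size s).-2
| NfRotR : nth false s (size s).-1 -> rb_at (rotr 1 s) 0 -> nf_head s [:: RotR] 0.

Definition crossing_word th p j q th' : Prop :=
  [/\ all is_rot p, all is_rot q, run (p ++ X j :: q) th = Some th' & rb_after th p j].

Definition crossing_reduces th p j q th' : Prop :=
  exists p2 j2 q2, [/\ size p2 < size p, crossing_word th p2 j2 q2 th',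
    wequiv th (p ++ X j :: q) (p2 ++ X j2 :: q2) &
    winding (p2 ++ X j2 :: q2) = winding (p ++ X j :: q)].

Lemma no_wrap_after_RotL2 u : nth false u 0 -> nth false (rot 1 u) 0 ->
  ~~ rb_at (rot 1 (rot 1 u)) (size u).-2.
Proof.
move=> H0 H1; apply/negP => /andP [HN]; rewrite !size_rot in HN.
have E : (size u).-2.+1 = (size u).-1 by lia.
have -> : nth false (rot 1 (rot 1 u)) (size u).-2 = nth false u 0.
  by rewrite nth_rot1 ?size_rot // E nth_rot1_last.
by rewrite E -{1}(size_rot 1 u) nth_rot1_last H0 H1.
Qed.

Lemma no_wrap_after_RotR2 u : nth false u (size u).-1 ->
  nth false (rotr 1 u) (size u).-1 -> ~~ rb_at (rotr 1 (rotr 1 u)) 0.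
Proof.
move=> H0 H1; apply/negP => /andP [HN]; rewrite !size_rotr in HN.
by rewrite nth_rotr1_0 size_rotr H1 nth_rotr1 ?size_rotr // nth_rotr1_0 H0.
Qed.

Lemma crossing_step_RotL th p j q th' : crossing_word th (rcons p RotL) j q th' ->
  nf_head th (rcons p RotL) j \/ crossing_reduces th (rcons p RotL) j q th'.
Proof.
case; rewrite all_rcons => /andP [_ Hp] Hq Hrun Hrb.
have [s Hs Hrun'] := run_catP Hrun.
have [t Ht /step_RotLP [Ht0 Es]] := run_rconsP Hs; subst s.
have Hrbj := Hrb _ Hs; have /andP [Hj _] := Hrbj; rewrite size_rot in Hj.
have HXq : run (X j :: q) (rot 1 t) != None by rewrite Hrun'.
have [Hj2|Hj2] := ltnP j.+2 (size t).
  have Hrb' : rb_at t j.+1 by rewrite -rb_at_rot1.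
  have H0 : nth false (swap_at j.+1 t) 0 by rewrite nth_swap_at //; lia.
  right; exists p, j.+1, (RotL :: q); split; rewrite ?size_rcons //.
  - split=> //; last exact: rb_after_run Ht Hrb'.
    rewrite run_cat Ht (run_step _ (step_X_rb Hrb')) (run_step _ (step_RotL_black H0)).
    by rewrite rot1_swap_at //; move: Hrun'; rewrite (run_step _ (step_X_rb Hrbj)).
  - rewrite -cats1 -catA; apply: (wequiv_slide_RotL Ht Ht0 Hj2 Hrb').
    by move: HXq; rewrite (run_step _ (step_X_rb Hrbj)).
  - by rewrite !winding_cat winding_rcons !winding_cons /=; lia.
have Ej : j = (size t).-2 by lia.
subst j.
clear Hrun Hs Hrb; case/lastP: p Hp Ht => [|p g] Hp Ht.
  by move: Ht Ht0 Hrbj => [<-] Ht0 Hrbj; left; apply: NfRotL.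
rewrite all_rcons in Hp; case/andP: Hp => Hg Hp.
case: g Hg Ht => [i|i||] // _ Ht; have [u Hu Hg] := run_rconsP Ht.
- have [Hu0 Et] := step_RotLP Hg; subst t.
  by move: Hrbj; rewrite size_rot (negbTE (no_wrap_after_RotL2 Hu0 Ht0)).
- have [HuN Et] := step_RotRP Hg; subst t; rewrite rotrK size_rotr in Hrun' Hrbj HXq *.
  right; exists p, (size u).-2, q; split; rewrite ?size_rcons //.
  + by split=> //; [rewrite run_cat Hu | exact: rb_after_run Hu Hrbj].
  + by rewrite -!cats1 -!catA; apply: (wequiv_cancel_RL Hu HuN).
  + by rewrite !winding_cat !winding_rcons !winding_cons /=; lia.
Qed.

Lemma crossing_step_RotR th p j q th' : crossing_word th (rcons p RotR) j q th' ->
  nf_head th (rcons p RotR) j \/ crossing_reduces th (rcons p RotR) j q th'.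
Proof.
case; rewrite all_rcons => /andP [_ Hp] Hq Hrun Hrb.
have [s Hs Hrun'] := run_catP Hrun.
have [t Ht /step_RotRP [HtN Es]] := run_rconsP Hs; subst s.
have Hrbj := Hrb _ Hs; have /andP [Hj _] := Hrbj; rewrite size_rotr in Hj.
have HXq : run (X j :: q) (rotr 1 t) != None by rewrite Hrun'.
clear Hrun Hs Hrb; case: j Hj Hrbj Hrun' HXq => [|k] Hj Hrbj Hrun' HXq.
  case/lastP: p Hp Ht => [|p g] Hp Ht.
    by move: Ht HtN Hrbj => [<-] HtN Hrbj; left; apply: NfRotR.
  rewrite all_rcons in Hp; case/andP: Hp => Hg Hp.
  case: g Hg Ht => [i|i||] // _ Ht; have [u Hu Hg] := run_rconsP Ht.
  - have [Hu0 Et] := step_RotLP Hg; subst t; rewrite rotK in Hrun' Hrbj HXq *.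
    right; exists p, 0, q; split; rewrite ?size_rcons //.
    + by split=> //; [rewrite run_cat Hu | exact: rb_after_run Hu Hrbj].
    + by rewrite -!cats1 -!catA; apply: (wequiv_cancel_LR Hu Hu0).
    + by rewrite !winding_cat !winding_rcons !winding_cons /=; lia.
  - have [HuN Et] := step_RotRP Hg; subst t; rewrite size_rotr in HtN.
    by move: Hrbj; rewrite (negbTE (no_wrap_after_RotR2 HuN HtN)).
have Hrb' : rb_at t k by rewrite -rb_at_rotr1.
have HN : nth false (swap_at k t) (size (swap_at k t)).-1.
  by rewrite size_swap_at ?nth_swap_at; try lia; rewrite !ifF //; lia.
right; exists p, k, (RotR :: q); split; rewrite ?size_rcons //.
- split=> //; last exact: rb_after_run Ht Hrb'.
  rewrite run_cat Ht (run_step _ (step_X_rb Hrb')) (run_step _ (step_RotR_black HN)).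
  by rewrite rotr1_swap_at //; move: Hrun'; rewrite (run_step _ (step_X_rb Hrbj)).
- rewrite -cats1 -catA; apply: (wequiv_slide_RotR Ht HtN Hj Hrb').
  by move: HXq; rewrite (run_step _ (step_X_rb Hrbj)).
- by rewrite !winding_cat winding_rcons !winding_cons /=; lia.
Qed.

Lemma crossing_step th p j q th' : crossing_word th p j q th' ->
  nf_head th p j \/ crossing_reduces th p j q th'.
Proof.
case/lastP: p => [|p g] Hcw.
  by left; case: Hcw => _ _ _ Hrb; apply/NfFree/Hrb.
have [+ _ _ _] := Hcw; rewrite all_rcons => /andP [Hg _].
by case: g Hg Hcw => // _; [exact: crossing_step_RotL | exact: crossing_step_RotR].
Qed.

Lemma crossing_nf th p j q th' : crossing_word th p j q th' ->
  exists pre j' q', [/\ nf_head th pre j', crossing_word th pre j' q' th',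
    wequiv th (p ++ X j :: q) (pre ++ X j' :: q') &
    winding (pre ++ X j' :: q') = winding (p ++ X j :: q)].
Proof.
have [n] := ubnP (size p); elim: n p j q => // n IHn p j q Hsize Hcw.
have [Hnf|[p2 [j2 [q2 [Hlt Hcw2 E W]]]]] := crossing_step Hcw.
  by exists p, j, q; split=> //; left.
have [|pre [j' [q' [Hnf Hcw' E' W']]]] := IHn p2 j2 q2 _ Hcw2; first by lia.
by exists pre, j', q'; split=> //; [exact: wequiv_trans E E' | rewrite W' W].
Qed.

Definition is_nf th w := exists pre j c, w = pre ++ X j :: rotword c /\ nf_head th pre j.

Lemma nf_exists th p j q th' : crossing_word th p j q th' ->
  exists w, [/\ is_nf th w, run w th = Some th', wequiv th (p ++ X j :: q) w &
    winding w = winding (p ++ X j :: q)].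
Proof.
move=> /crossing_nf [pre [j' [q' [Hnf [_ Hq' Hrun _] E W]]]].
have /run_catP [s Hs Hq] : run ((pre ++ [:: X j']) ++ q') th = Some th' by rewrite -catA.
have [E2 Hm] := wequiv_rotword (Q := [::]) Hq' Hs Hq isT; rewrite !cats0 -!catA in E2.
exists (pre ++ X j' :: rotword (winding q')); split.
- by exists pre, j', (winding q').
- by rewrite -[_ :: _]/([:: X j'] ++ _) catA run_cat Hs.
- exact: wequiv_trans E E2.
- by rewrite -W !winding_cat !winding_cons winding_rotword.
Qed.

Lemma run_rot_inj w x y z : all is_rot w ->
  run w x = Some z -> run w y = Some z -> x = y.
Proof.
elim: w x y => [|g w IH] x y; first by move=> _ [->] [->].
case: g => [i|i||] /andP [Hg Hw] //.
- move=> /run_consP [x1 /step_RotLP [_ ->] Hx] /run_consP [y1 /step_RotLP [_ Ey] Hy].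
  by subst y1; apply: rot_inj; exact: IH Hw Hx Hy.
- move=> /run_consP [x1 /step_RotRP [_ ->] Hx] /run_consP [y1 /step_RotRP [_ Ey] Hy].
  by subst y1; apply: rotr_inj; exact: IH Hw Hx Hy.
Qed.

Lemma run_rotword_succ c x y z :
  run (rotword c) y = Some z -> run (rotword (c + 1)) x = Some z -> y = rot 1 x.
Proof.
have [Hc|Hc] := boolP (0 <= c)%R.
  rewrite rotwordD1 // => Hy /run_consP [x1 /step_RotLP [_ Ex] Hx]; subst x1.
  exact: run_rot_inj (all_rot_rotword c) Hy Hx.
rewrite (rotword_neg (c := c)); last by lia.
move=> /run_consP [y1 /step_RotRP [_ Ey] Hy] Hx; subst y1.
by rewrite -(run_rot_inj (all_rot_rotword _) Hy Hx) rotrK.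
Qed.

Lemma swap_at_inj s i j : rb_at s i -> rb_at s j -> swap_at i s = swap_at j s -> i = j.
Proof.
have key k l : rb_at s k -> rb_at s l -> swap_at k s = swap_at l s -> ~ k < l.
  move=> /andP [Hk Rk] /andP [Hl _] E Hkl; move/eqP: Rk; apply.
  move: (congr1 (nth false ^~ k) E) => /=; rewrite !nth_swap_at // eqxx.
  by rewrite !ifF //; lia.
move=> Hi Hj E; case: (ltngtP i j) => // H; exfalso.
  exact: key Hi Hj E H.
exact: key Hj Hi (esym E) H.
Qed.

Lemma run_rotword_bw c z : run (rotword c) [:: true; false] = Some z -> (0 <= c <= 1)%R.
Proof. by case: c => [[|[|k]]|[|k]]. Qed.

Lemma run_rotword_wb c z : run (rotword c) [:: false; true] = Some z -> (-1 <= c <= 0)%R.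
Proof. by case: c => [[|k]|[|k]]. Qed.

Lemma nf_free_RotL_absurd th j c th' : rb_at th j -> nth false th 0 ->
  rb_at (rot 1 th) (size th).-2 -> run (rotword (c + 1)) (swap_at j th) = Some th' ->
  run (rotword c) (swap_at (size th).-2 (rot 1 th)) = Some th' -> False.
Proof.
move=> Hj H0 Hw Hx Hy; have E := run_rotword_succ Hy Hx.
have /andP [Hj1 _] := Hj; have /andP [HN Rw] := Hw; rewrite size_rot in HN.
(* With two points E carries no information: it is the rotations that cannot
   both run. *)
have [N2|N3] := eqVneq (size th) 2.
  case: th N2 Hj Hj1 H0 Hw Hx Hy {E HN Rw} => [|x [|y [|]]] // _.
  case: j => [|//] _ _; case: x => // _; case: y => // _ Hx Hy.
  by have := run_rotword_wb Hx; have := run_rotword_bw Hy; lia.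
have EN : (size th).-2.+1 = (size th).-1 by lia.
case: j Hj Hj1 Hx E => [|j] Hj Hj1 Hx E.
  have : nth false (swap_at (size th).-2 (rot 1 th)) (size th).-2 =
         nth false (rot 1 (swap_at 0 th)) (size th).-2 by rewrite E.
  rewrite nth_swap_at ?size_rot // eqxx EN nth_rot1_last nth_rot1 ?size_swap_at // EN.
  rewrite nth_swap_at // !ifF; try lia.
  by move: Rw; rewrite nth_rot1 ?EN ?nth_rot1_last; [move=> + Eth; rewrite Eth eqxx | lia].
rewrite rot1_swap_at // in E.
have Hrb : rb_at (rot 1 th) j by rewrite rb_at_rot1.
by have := swap_at_inj Hw Hrb E; lia.
Qed.

Lemma nf_free_RotR_absurd th j c th' : rb_at th j -> nth false th (size th).-1 ->
  rb_at (rotr 1 th) 0 -> run (rotword c) (swap_at j th) = Some th' ->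
  run (rotword (c + 1)) (swap_at 0 (rotr 1 th)) = Some th' -> False.
Proof.
move=> Hj HN Hw Hx Hy; have E := run_rotword_succ Hx Hy.
have /andP [Hj1 _] := Hj; have /andP [HN1 Rw] := Hw; rewrite size_rotr in HN1.
have [N2|N3] := eqVneq (size th) 2.
  case: th N2 Hj Hj1 HN Hw Hx Hy {E HN1 Rw} => [|x [|y [|]]] // _.
  case: j => [|//] _ _; case: y => // _; case: x => // _ Hx Hy.
  by have := run_rotword_bw Hx; have := run_rotword_wb Hy; lia.
have [Hj2|Hj2] := ltnP j.+2 (size th).
  move/(congr1 (rotr 1)): E; rewrite rotK rotr1_swap_at // => E.
  have Hrb : rb_at (rotr 1 th) j.+1 by rewrite rb_at_rotr1.
  by have := swap_at_inj Hrb Hw E.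
have : nth false (swap_at j th) 0 = nth false (rot 1 (swap_at 0 (rotr 1 th))) 0 by rewrite E.
rewrite nth_swap_at // !ifF; try lia.
rewrite nth_rot1 ?size_swap_at ?size_rotr //; try lia.
rewrite nth_swap_at ?size_rotr // nth_rotr1_0 /=.
by move: Rw; rewrite nth_rotr1_0 nth_rotr1 // => + Eth; rewrite Eth eqxx.
Qed.

Lemma nf_RotL_RotR_absurd th : nth false th 0 -> rb_at (rot 1 th) (size th).-2 ->
  nth false th (size th).-1 -> False.
Proof.
move=> H0 /andP [HN]; rewrite size_rot in HN.
have EN : (size th).-2.+1 = (size th).-1 by lia.
rewrite nth_rot1 EN ?nth_rot1_last ?H0; last lia.
by case: (nth false th (size th).-1).
Qed.

Lemma nf_unique th th' w1 w2 : is_nf th w1 -> is_nf th w2 ->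
  run w1 th = Some th' -> run w2 th = Some th' -> winding w1 = winding w2 -> w1 = w2.
Proof.
have runX s j c : run (X j :: rotword c) s = Some th' ->
    run (rotword c) (swap_at j s) = Some th'.
  by case/run_consP=> s1 /step_XP [_ _ ->].
have runL j c : run (RotL :: X j :: rotword c) th = Some th' ->
    run (rotword c) (swap_at j (rot 1 th)) = Some th'.
  by case/run_consP=> s1 /step_RotLP [_ ->] /runX.
have runR j c : run (RotR :: X j :: rotword c) th = Some th' ->
    run (rotword c) (swap_at j (rotr 1 th)) = Some th'.
  by case/run_consP=> s1 /step_RotRP [_ ->] /runX.
move=> [pre1 [j1 [c1 [-> H1]]]] [pre2 [j2 [c2 [-> H2]]]].
case: H1 => [{}j1 Hj1|H01 Hw1|HN1 Hw1]; case: H2 => [{}j2 Hj2|H02 Hw2|HN2 Hw2];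
  move=> R1 R2; rewrite !winding_cat !winding_cons !winding_rotword ?winding_nil => /= W.
- have Ec : c1 = c2 by lia.
  subst c1; congr (X _ :: _).
  exact: swap_at_inj Hj1 Hj2 (run_rot_inj (all_rot_rotword c2) (runX _ _ _ R1) (runX _ _ _ R2)).
- have Ec : c1 = (c2 + 1)%R by lia.
  by subst c1; case: (nf_free_RotL_absurd Hj1 H02 Hw2 (runX _ _ _ R1) (runL _ _ R2)).
- have Ec : c2 = (c1 + 1)%R by lia.
  by subst c2; case: (nf_free_RotR_absurd Hj1 HN2 Hw2 (runX _ _ _ R1) (runR _ _ R2)).
- have Ec : c2 = (c1 + 1)%R by lia.
  by subst c2; case: (nf_free_RotL_absurd Hj2 H01 Hw1 (runX _ _ _ R2) (runL _ _ R1)).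
- by have -> : c1 = c2 by lia.
- by case: (nf_RotL_RotR_absurd H01 Hw1 HN2).
- have Ec : c1 = (c2 + 1)%R by lia.
  by subst c1; case: (nf_free_RotR_absurd Hj2 HN1 Hw1 (runX _ _ _ R2) (runR _ _ R1)).
- by case: (nf_RotL_RotR_absurd H02 Hw2 HN1).
- by have -> : c1 = c2 by lia.
Qed.

Lemma crossing_words_wequiv th th' p1 j1 q1 p2 j2 q2 :
  crossing_word th p1 j1 q1 th' -> crossing_word th p2 j2 q2 th' ->
  winding (p1 ++ X j1 :: q1) = winding (p2 ++ X j2 :: q2) ->
  wequiv th (p1 ++ X j1 :: q1) (p2 ++ X j2 :: q2).
Proof.
move=> /nf_exists [w1 [N1 R1 E1 W1]] /nf_exists [w2 [N2 R2 E2 W2]] W.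
have Ew : w1 = w2 by apply: nf_unique N1 N2 R1 R2 _; rewrite W1 W2.
by subst w2; apply: wequiv_trans E1 (wequiv_sym E2).
Qed.

Record census := Census { n_rb : nat; n_bb : nat; n_dot : nat }.

Definition census_add (c1 c2 : census) : census :=
  Census (n_rb c1 + n_rb c2) (n_bb c1 + n_bb c2) (n_dot c1 + n_dot c2).

Definition gcensus (g : gen) (s : obj) : census :=
  match g with
  | X i => if nth false s i && nth false s i.+1 then Census 0 1 0 else Census 1 0 0
  | Defs.Dot _ => Census 0 0 1
  | _ => Census 0 0 0
  end.

Fixpoint wcensus (w : word) (s : obj) : census :=
  match w with
  | [::] => Census 0 0 0
  | g :: w' =>
    census_add (gcensus g s) (if step g s is Some s1 then wcensus w' s1 else Census 0 0 0)
  end.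

Definition census_deg (c : census) (k : int) : deg :=
  ((n_rb c)%:R - 2 * (n_bb c)%:R + 2 * (n_dot c)%:R, (n_rb c)%:R / 2 + (n_dot c)%:R,
   (n_bb c)%:R - (n_dot c)%:R, k%:~R)%R.

Lemma wdeg_census w s : run w s != None -> wdeg w s = census_deg (wcensus w s) (winding w).
Proof.
elim: w s => [|g w IH] s.
  by move=> _; rewrite /census_deg winding_nil /=; congr (_, _, _, _); ring.
rewrite /=; case Hg: (step g s) => [s1|] // /IH {}IH.
rewrite IH winding_cons /census_deg /dadd /=.
case: g Hg => [i|i||] _ /=; first case: (_ && _);
  by rewrite ?natrD ?rmorphD /=; congr (_, _, _, _); ring.
Qed.

Lemma wcensus_step g w s s1 : step g s = Some s1 ->
  wcensus (g :: w) s = census_add (gcensus g s) (wcensus w s1).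
Proof. by move=> /= ->. Qed.

Lemma add0_census c : census_add (Census 0 0 0) c = c.
Proof. by case: c. Qed.

Lemma wcensus_rot w s : all is_rot w -> wcensus w s = Census 0 0 0.
Proof.
elim: w s => [|g w IH] s //= /andP [Hg Hw].
by case: g Hg => // _; case: (step _ s) => // s1; rewrite IH.
Qed.

Lemma wcensus0_rot w s : run w s != None -> wcensus w s = Census 0 0 0 -> all is_rot w.
Proof.
elim: w s => [|g w IH] s //=; case Hg: (step g s) => [s1|] // /IH {}IH.
case: g Hg => [i|i||] _ /=.
- by case: (_ && _) => [/(congr1 n_bb)|/(congr1 n_rb)].
- by move/(congr1 n_dot).
- by rewrite add0_census => /IH.
- by rewrite add0_census => /IH.
Qed.

Lemma wcensus_crossing th p j q th' : crossing_word th p j q th' ->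
  wcensus (p ++ X j :: q) th = Census 1 0 0.
Proof.
case=> + Hq; elim: p th => [|g p IH] th.
  move=> _ _ /(_ th erefl) Hrb.
  rewrite cat0s (wcensus_step _ (step_X_rb Hrb)) wcensus_rot //.
  by case/andP: Hrb => _; rewrite /gcensus; case: (nth false th j); case: (nth false th j.+1).
move=> /andP [Hg Hp] /run_consP [t Ht Hrun] Hrb.
rewrite cat_cons (wcensus_step _ Ht) (IH t) //; first by case: g Hg {Ht Hrb}.
by move=> s Hs; apply: Hrb; rewrite /= Ht.
Qed.

Lemma wcensus_crossing_word w s s' : run w s = Some s' -> wcensus w s = Census 1 0 0 ->
  exists p j q, w = p ++ X j :: q /\ crossing_word s p j q s'.
Proof.
elim: w s => [|g w IH] s Hrun; first by move/(congr1 n_rb).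
have [s1 Hg Hw] := run_consP Hrun.
rewrite (wcensus_step _ Hg); case: g Hg Hrun => [i|i||] Hg Hrun.
- have [Hi Hbl Es1] := step_XP Hg; subst s1; rewrite /gcensus.
  case Hbb: (_ && _); first by move/(congr1 n_bb).
  move=> Hcen; have Hc : wcensus w (swap_at i s) = Census 0 0 0.
    by move: Hcen; case: (wcensus _ _) => a b d [Ha Hb Hd]; congr Census; lia.
  exists [::], i, w; split=> //; split=> //.
    by apply: (wcensus0_rot (s := swap_at i s)); rewrite ?Hw.
  move=> _ [<-]; apply/andP; split=> //.
  by move: Hbl Hbb; case: (nth false s i); case: (nth false s i.+1).
- by move/(congr1 n_dot).
- rewrite add0_census => /(IH _ Hw) [p [j [q [-> [Hp Hq Hr Hrb]]]]].
  exists (RotL :: p), j, q; split=> //; split=> //; first by rewrite cat_cons (run_step _ Hg).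
  by move=> t; rewrite (run_step _ Hg); apply: Hrb.
- rewrite add0_census => /(IH _ Hw) [p [j [q [-> [Hp Hq Hr Hrb]]]]].
  exists (RotR :: p), j, q; split=> //; split=> //; first by rewrite cat_cons (run_step _ Hg).
  by move=> t; rewrite (run_step _ Hg); apply: Hrb.
Qed.

Lemma tdeg_crossing th p i q th' a b w : crossing_word th p i q th' ->
  run w th = Some th' -> tdeg th (a, b, w) = tdeg th (0%N, 0%N, p ++ X i :: q) ->
  [/\ a = 0%N, b = 0%N, wcensus w th = Census 1 0 0 & winding w = winding (p ++ X i :: q)].
Proof.
move=> Hcw Hw; have [_ _ HD _] := Hcw.
rewrite /tdeg !wdeg_census ?Hw ?HD // (wcensus_crossing Hcw).
case: (wcensus w th) => r bb d; rewrite /census_deg /dadd /= => -[_ eU eH eC].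
have /eqP : ((r + 2 * d + 2 * b)%N%:R = 1 :> rat)%R by rewrite !natrD; lra.
rewrite pnatr_eq1 => /eqP Hu.
have Hd : d = 0%N by lia.
have /eqP : ((bb + a)%N%:R = 0 :> rat)%R by rewrite natrD; subst d; lra.
rewrite pnatr_eq0 => /eqP Hv.
split; [lia | lia | congr Census; lia | apply: (@intr_inj rat); lra].
Qed.

(* A red-black bigon at the crossing shows that the relations contain 0. *)
Lemma crossing_inspan0 th p j q th' : crossing_word th p j q th' -> inspan th [::].
Proof.
case=> _ _ Hrun Hrb; have [s Hs _] := run_catP Hrun.
have Hj := Hrb s Hs; have /andP [Hj1 Rj] := Hj.
pose k := if nth false s j then j else j.+1.
have Hk : nth false s k.
  by rewrite /k; case E: (nth false s j) => //; move: Rj; rewrite E; case: (nth _ _ _).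
have Hkj : (k == j) || (k == j.+1) by rewrite /k; case: ifP; rewrite eqxx ?orbT.
have Hj' : rb_at (swap_at j s) j.
  rewrite /rb_at size_swap_at // Hj1 !nth_swap_at //.
  by rewrite eqxx (gtn_eqF (ltnSn j)) eqxx eq_sym.
have HXX : run [:: X j; X j] s = Some s.
  by rewrite (run_step _ (step_X_rb Hj)) (run_step _ (step_X_rb Hj')) swap_atK.
apply: inspan0 (sp_rel 0 0 (br_rb_bigon Hj1 Hkj Hk Rj) Hs _ (isT : run [::] s != None)).
by move=> t; rewrite inE => /eqP ->.
Qed.

Lemma hom_eq_wequiv_sum th D (f : fsum) : inspan th [::] ->
  (forall kt, kt \in f -> exists2 w, kt.2 = (0%N, 0%N, w) & wequiv th w D) ->
  hom_eq th f (scal [:: (\sum_(kt <- f) kt.1, (0%N, 0%N))]%R D).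
Proof.
rewrite /hom_eq /scal /= => Z; elim: f => [|[k t] f IH] Hf.
  by apply: (sp_ext _ Z) => u; rewrite /= coef_cons_term coef_nil big_nil mulr0; case: ifP.
have [w /= Et Hw] := Hf _ (mem_head _ _); subst t.
have {}IH := IH (fun kt H => Hf kt (mem_behead (s := (k, _) :: f) H)).
case: Hw => [Ew|Hw].
  subst w; apply: (sp_ext _ IH) => u.
  rewrite /fscale /= !(coef_cat, coef_cons_term, coef_nil) big_cons /=.
  by case: ((0%N, 0%N, D) == u); ring.
apply: (sp_ext _ (sp_add (sp_scale k Hw) IH)) => u.
rewrite /wsum /fscale /= !(coef_cat, coef_cons_term, coef_nil) big_cons /=.
by case: ((0%N, 0%N, D) == u); case: ((0%N, 0%N, w) == u); ring.
Qed.

Lemma one_rb_crossing_word th th' D : one_rb_crossing th th' D ->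
  exists p i q, D = p ++ X i :: q /\ crossing_word th p i q th'.
Proof.
case=> HD [p [q [i [ED Hp Hq Hrb]]]]; exists p, i, q; split=> //; subst D; split=> // s Hs.
have [s0 Hs0 /run_consP [s1 /step_XP [Hi _ _] _]] := run_catP HD.
by move: Hs0; rewrite Hs => -[Es]; subst s0; rewrite /rb_at Hi Hrb.
Qed.

Theorem lemma2p2 (r n : nat) (th th' : obj) (D : word) (f : fsum) :
  is_obj r n th -> is_obj r n th' ->
  one_rb_crossing th th' D ->
  homog th th' (tdeg th (0%N, 0%N, D)) f ->
  exists c : seq (int * (nat * nat)), hom_eq th f (scal c D).
Proof.
move=> _ _ /one_rb_crossing_word [p [i [q [-> HcwD]]]] Hf.
exists [:: (\sum_(kt <- f) kt.1, (0%N, 0%N))]%R.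
apply: (hom_eq_wequiv_sum (crossing_inspan0 HcwD)) => -[k [[a b] w]] /Hf [/= Hw Hdeg].
have [-> -> Hcen W] := tdeg_crossing HcwD Hw Hdeg.
have [p' [j [q' [Ew Hcw]]]] := wcensus_crossing_word Hw Hcen; subst w.
by exists (p' ++ X j :: q'); last exact: crossing_words_wequiv Hcw HcwD W.
Qed.
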